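(* Let $P$ be a point in $D$ with $P\neq O=(0,0)$. Let $u_1,u_2\in S^1$ be the intersections of the line $OP$ with $S^1$, with $|u_1P|<|u_2P|$. Then $\psi_P'(v)$ is monotonically increasing for $v\in arc[u_2,u_1)$ and monotonically decreasing for $v\in arc[u_1,u_2)$.
   Context: $D$ is the open unit disk in $\mathbb R^2$, $S^1$ its boundary circle identified with $\mathbb R/\mathbb Z$ via the counterclockwise normalized angle, $\pi:\mathbb R\to S^1$ the projection. For $P\in D$ and $v\in S^1$, $\psi_P(v)$ is the second intersection point of the line $vP$ with $S^1$. For a homeomorphism $g$ of $S^1$ with lift $\overline g$ ($\overline g(0)\in[0,1)$), $g'(x)=\overline g'(u)$ for $u\in\pi^{-1}(x)$. For $w_1,w_2\in S^1$, $arc[w_1,w_2)$ is the counterclockwise arc from $w_1$ to $w_2$ including $w_1$ and excluding $w_2$; monotonicity is along the arc traversed counterclockwise. $|XY|$ is Euclidean distance. *)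

From Stdlib Require Import Reals.
From Coquelicot Require Import Coquelicot.
Open Scope R_scope.

Definition pt := (R * R)%type.
Definition O : pt := (0, 0).

Definition edist (X Y : pt) : R :=
  sqrt ((fst X - fst Y) ^ 2 + (snd X - snd Y) ^ 2).

Definition in_D (X : pt) : Prop := fst X ^ 2 + snd X ^ 2 < 1.
Definition on_S1 (X : pt) : Prop := fst X ^ 2 + snd X ^ 2 = 1.

(* The point of S^1 with counterclockwise normalized angle t,
   i.e. the composite of pi : R -> R/Z with R/Z ~ S^1. *)
Definition e (t : R) : pt := (cos (2 * PI * t), sin (2 * PI * t)).

Definition collinear (A B C : pt) : Prop :=
  (fst B - fst A) * (snd C - snd A) - (snd B - snd A) * (fst C - fst A) = 0.

(* is_psi P v w : w = psi_P(v), the second intersection point of the line vP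
   with S^1 (for v on S^1 and P in D, the line vP is not tangent, so this is
   the unique point of S^1 on the line vP different from v). *)
Definition is_psi (P v w : pt) : Prop :=
  on_S1 w /\ collinear v P w /\ w <> v.

From Stdlib Require Import Reals Lra.
From Coquelicot Require Import Coquelicot.
Open Scope R_scope.

(* For P = (p, q) inside the disk and v = e t, the second intersection w of the line vP
   with the circle satisfies |P - v|^2 w = -(1 - |P|^2) v + 2 (1 - P.v) P.  Differentiating
   the angle of w gives psi_P'(t) = (1 - |P|^2) / |P - e t|^2.  Writing P = c u1 with
   c = |P| > 0 (u1 is the endpoint nearer to P) and u1 = e a, we get
   |P - e t|^2 = 1 + c^2 - 2 c cos (2 PI (t - a)), so the derivative increases as e t
   moves towards u1 along either half circle from the antipode u2 = -u1. *)

Definition dot_e (p q t : R) : R := p * cos (2 * PI * t) + q * sin (2 * PI * t).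

Definition dist2_e (p q t : R) : R := p ^ 2 + q ^ 2 + 1 - 2 * dot_e p q t.

Definition psi_num_x (p q t : R) : R :=
  - (1 - (p ^ 2 + q ^ 2)) * cos (2 * PI * t) + 2 * (1 - dot_e p q t) * p.

Definition psi_num_y (p q t : R) : R :=
  - (1 - (p ^ 2 + q ^ 2)) * sin (2 * PI * t) + 2 * (1 - dot_e p q t) * q.

Lemma cos_sin_sq (x : R) : cos x ^ 2 + sin x ^ 2 = 1.
Proof. rewrite <- (sin2_cos2 x). unfold Rsqr. ring. Qed.

Lemma sum_sq_pos_of_neq (a b c d : R) : (a, b) <> (c, d) -> 0 < (a - c) ^ 2 + (b - d) ^ 2.
Proof.
  intros Hne.
  destruct (Req_dec a c) as [-> | Hac].
  - destruct (Req_dec b d) as [-> | Hbd]; [congruence |].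
    assert (0 < (b - d) ^ 2) by (apply pow2_gt_0; intro; apply Hbd; lra). lra.
  - assert (0 < (a - c) ^ 2) by (apply pow2_gt_0; intro; apply Hac; lra).
    pose proof (pow2_ge_0 (b - d)). lra.
Qed.

Lemma collinear_affine (c s p q x y : R) :
  (p - c) * (y - s) - (q - s) * (x - c) = 0 -> (p, q) <> (c, s) ->
  exists l, x = c + l * (p - c) /\ y = s + l * (q - s).
Proof.
  intros Hcol Hne.
  pose proof (sum_sq_pos_of_neq _ _ _ _ Hne) as HB.
  set (B := (p - c) ^ 2 + (q - s) ^ 2) in *.
  set (A := (x - c) * (p - c) + (y - s) * (q - s)).
  assert (Ex : (x - c) * B = A * (p - c)).
  { transitivity (A * (p - c) - (q - s) * ((p - c) * (y - s) - (q - s) * (x - c))).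
    - unfold A, B. ring.
    - rewrite Hcol. ring. }
  assert (Ey : (y - s) * B = A * (q - s)).
  { transitivity (A * (q - s) + (p - c) * ((p - c) * (y - s) - (q - s) * (x - c))).
    - unfold A, B. ring.
    - rewrite Hcol. ring. }
  exists (A / B). split.
  - replace x with (c + (x - c) * B / B) by (field; lra). rewrite Ex. field. lra.
  - replace y with (s + (y - s) * B / B) by (field; lra). rewrite Ey. field. lra.
Qed.

Lemma dist2_e_eq (p q t : R) :
  dist2_e p q t = (p - cos (2 * PI * t)) ^ 2 + (q - sin (2 * PI * t)) ^ 2.
Proof.
  pose proof (cos_sin_sq (2 * PI * t)). unfold dist2_e, dot_e. nra.
Qed.

Lemma dist2_e_pos (p q t : R) : in_D (p, q) -> 0 < dist2_e p q t.
Proof.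
  intros HP. rewrite dist2_e_eq. apply sum_sq_pos_of_neq.
  intros [= -> ->]. pose proof (cos_sin_sq (2 * PI * t)).
  unfold in_D in HP; cbn [fst snd] in HP. lra.
Qed.

Lemma is_psi_e_coords (p q t x y : R) :
  in_D (p, q) -> is_psi (p, q) (e t) (x, y) ->
  x * dist2_e p q t = psi_num_x p q t /\ y * dist2_e p q t = psi_num_y p q t.
Proof.
  intros HP [Hw [Hcol Hne]].
  rewrite !dist2_e_eq.
  unfold psi_num_x, psi_num_y, dot_e, in_D, on_S1, collinear, e in *; cbn [fst snd] in *.
  pose proof (cos_sin_sq (2 * PI * t)) as Hcs.
  set (c := cos (2 * PI * t)) in *. set (s := sin (2 * PI * t)) in *.
  set (B := (p - c) ^ 2 + (q - s) ^ 2) in *.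
  assert (HPv : (p, q) <> (c, s)) by (intros [= -> ->]; lra).
  (* w = v + l (P - v), and |w| = 1 with w <> v forces l |P - v|^2 = 2 (1 - P.v). *)
  destruct (collinear_affine c s p q x y Hcol HPv) as [l [-> ->]].
  assert (Hl : l <> 0) by (intros ->; apply Hne; f_equal; ring).
  assert (HlB : l * B = 2 * (1 - (p * c + q * s))).
  { assert (Hq : l * (l * B - 2 * (1 - (p * c + q * s))) = 0) by (unfold B; nra).
    destruct (Rmult_integral _ _ Hq); [contradiction | lra]. }
  split.
  - replace ((c + l * (p - c)) * B) with (c * B + l * B * (p - c)) by ring.
    rewrite HlB. unfold B.
    assert (c * (c ^ 2 + s ^ 2) = c) by (rewrite Hcs; ring). lra.
  - replace ((s + l * (q - s)) * B) with (s * B + l * B * (q - s)) by ring.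
    rewrite HlB. unfold B.
    assert (s * (c ^ 2 + s ^ 2) = s) by (rewrite Hcs; ring). lra.
Qed.

Lemma is_derive_asin_0 : is_derive asin 0 1.
Proof.
  assert (H : -1 < 0 < 1) by lra.
  apply is_derive_Reals.
  apply (proj1 (derive_pt_eq asin 0 1 (derivable_pt_asin 0 H))).
  rewrite derive_pt_asin, Rsqr_0, Rminus_0_r, sqrt_1. field.
Qed.

(* Near [t0] the lift is recovered as [g t0 + asin (sin (2 PI (g t - g t0))) / (2 PI)]. *)
Lemma is_derive_angle_lift (g X Y : R -> R) (t0 L : R) :
  continuous g t0 ->
  (forall t, cos (2 * PI * g t) = X t /\ sin (2 * PI * g t) = Y t) ->
  is_derive (fun t => X t0 * Y t - Y t0 * X t) t0 L ->
  is_derive g t0 (L / (2 * PI)).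
Proof.
  intros Hcont Hcs HL.
  pose proof PI_RGT_0 as HPI.
  set (S := fun t => X t0 * Y t - Y t0 * X t) in HL.
  assert (HS : forall t, S t = sin (2 * PI * g t - 2 * PI * g t0)).
  { intro t. unfold S. rewrite sin_minus.
    destruct (Hcs t) as [-> ->], (Hcs t0) as [-> ->]. ring. }
  assert (Hnear : locally t0 (fun t => g t0 + / (2 * PI) * asin (S t) = g t)).
  { assert (H4 : 0 < 1 / 4) by lra.
    apply (filter_imp (fun t => Rabs (g t - g t0) < 1 / 4)).
    - intros t Ht. apply Rabs_def2 in Ht.
      rewrite HS, asin_sin; [field; lra | split; nra].
    - exact (proj1 (filterlim_locally g (g t0)) Hcont (mkposreal _ H4)). }
  apply (is_derive_ext_loc _ _ _ _ Hnear).
  assert (Hasin : is_derive asin (S t0) 1).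
  { rewrite HS, Rminus_diag, sin_0. exact is_derive_asin_0. }
  replace (L / (2 * PI)) with (plus zero (/ (2 * PI) * scal L 1)).
  - exact (is_derive_plus _ _ t0 _ _ (is_derive_const (g t0) t0)
             (is_derive_scal _ t0 _ _ (is_derive_comp asin S t0 1 L Hasin HL))).
  - rewrite plus_zero_l. unfold scal; simpl. unfold mult; simpl. field. lra.
Qed.

Lemma is_derive_cross_div (N1 N2 D : R -> R) (t0 N1' N2' D' : R) :
  is_derive N1 t0 N1' -> is_derive N2 t0 N2' -> is_derive D t0 D' -> D t0 <> 0 ->
  is_derive (fun t => N1 t0 / D t0 * (N2 t / D t) - N2 t0 / D t0 * (N1 t / D t)) t0
    ((N1 t0 * N2' - N2 t0 * N1') / D t0 ^ 2).
Proof.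
  intros H1 H2 HD HD0.
  pose proof (is_derive_minus _ _ t0 _ _
    (is_derive_scal _ t0 (N1 t0 / D t0) _ (is_derive_div _ _ t0 _ _ H2 HD HD0))
    (is_derive_scal _ t0 (N2 t0 / D t0) _ (is_derive_div _ _ t0 _ _ H1 HD HD0))) as H.
  replace ((N1 t0 * N2' - N2 t0 * N1') / D t0 ^ 2) with
    (minus (N1 t0 / D t0 * ((N2' * D t0 - N2 t0 * D') / D t0 ^ 2))
           (N2 t0 / D t0 * ((N1' * D t0 - N1 t0 * D') / D t0 ^ 2))).
  - exact H.
  - unfold minus, plus, opp; simpl. field. exact HD0.
Qed.

Lemma is_derive_psi_cross (p q t0 : R) : in_D (p, q) ->
  is_derive (fun t => psi_num_x p q t0 / dist2_e p q t0 * (psi_num_y p q t / dist2_e p q t)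
                    - psi_num_y p q t0 / dist2_e p q t0 * (psi_num_x p q t / dist2_e p q t))
    t0 (2 * PI * (1 - (p ^ 2 + q ^ 2)) / dist2_e p q t0).
Proof.
  intros HP. pose proof (dist2_e_pos p q t0 HP) as HD.
  pose proof (cos_sin_sq (2 * PI * t0)) as Hcs.
  set (c := cos (2 * PI * t0)) in *. set (s := sin (2 * PI * t0)) in *.
  set (k := 1 - (p ^ 2 + q ^ 2)).
  set (m' := 2 * PI * (q * c - p * s)).
  assert (Hx : is_derive (psi_num_x p q) t0 (2 * PI * k * s - 2 * p * m')).
  { unfold psi_num_x, dot_e. auto_derive; [exact I |]. unfold k, m', c, s. ring. }
  assert (Hy : is_derive (psi_num_y p q) t0 (- 2 * PI * k * c - 2 * q * m')).
  { unfold psi_num_y, dot_e. auto_derive; [exact I |]. unfold k, m', c, s. ring. }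
  assert (HD' : is_derive (dist2_e p q) t0 (- 2 * m')).
  { unfold dist2_e, dot_e. auto_derive; [exact I |]. unfold m', c, s. ring. }
  replace (2 * PI * k / dist2_e p q t0) with
    ((psi_num_x p q t0 * (- 2 * PI * k * c - 2 * q * m')
      - psi_num_y p q t0 * (2 * PI * k * s - 2 * p * m')) / dist2_e p q t0 ^ 2).
  - apply (is_derive_cross_div _ _ _ _ _ _ _ Hx Hy HD'). lra.
  - assert (Hnum : psi_num_x p q t0 * (- 2 * PI * k * c - 2 * q * m')
                   - psi_num_y p q t0 * (2 * PI * k * s - 2 * p * m')
                   = 2 * PI * k * dist2_e p q t0
                     + 2 * PI * k * (1 + (p ^ 2 + q ^ 2)) * (c ^ 2 + s ^ 2 - 1)).
    { unfold psi_num_x, psi_num_y, dist2_e, dot_e, k, m'. fold c s. ring. }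
    rewrite Hnum, Hcs. field. lra.
Qed.

Definition psi_deriv (p q t : R) : R := (1 - (p ^ 2 + q ^ 2)) / dist2_e p q t.

Lemma is_derive_psi_lift (p q : R) (g : R -> R) (t0 : R) :
  in_D (p, q) -> continuous g t0 -> (forall t, is_psi (p, q) (e t) (e (g t))) ->
  is_derive g t0 (psi_deriv p q t0).
Proof.
  intros HP Hcont Hpsi.
  replace (psi_deriv p q t0)
    with (2 * PI * (1 - (p ^ 2 + q ^ 2)) / dist2_e p q t0 / (2 * PI))
    by (unfold psi_deriv; field;
        split; [apply Rgt_not_eq, dist2_e_pos, HP | pose proof PI_RGT_0; lra]).
  apply (is_derive_angle_lift g (fun t => psi_num_x p q t / dist2_e p q t)
           (fun t => psi_num_y p q t / dist2_e p q t));
    [exact Hcont | | exact (is_derive_psi_cross p q t0 HP)].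
  intro t. pose proof (dist2_e_pos p q t HP) as HD.
  destruct (is_psi_e_coords p q t (cos (2 * PI * g t)) (sin (2 * PI * g t)) HP (Hpsi t))
    as [Hx Hy].
  split; [rewrite <- Hx | rewrite <- Hy]; field; lra.
Qed.

Lemma psi_deriv_pos (p q t : R) : in_D (p, q) -> 0 < psi_deriv p q t.
Proof.
  intros HP. pose proof (dist2_e_pos p q t HP). unfold in_D in HP; cbn [fst snd] in HP.
  unfold psi_deriv. apply Rdiv_lt_0_compat; lra.
Qed.

Lemma psi_deriv_le (p q s t : R) : in_D (p, q) ->
  dot_e p q s <= dot_e p q t -> psi_deriv p q s <= psi_deriv p q t.
Proof.
  intros HP Hst. pose proof (dist2_e_pos p q t HP). unfold in_D in HP; cbn [fst snd] in HP.
  unfold psi_deriv. apply Rmult_le_compat_l; [lra |].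
  apply Rinv_le_contravar; [lra |]. unfold dist2_e. lra.
Qed.

Lemma dot_e_polar (c a p q t : R) :
  p = c * cos (2 * PI * a) -> q = c * sin (2 * PI * a) ->
  dot_e p q t = c * cos (2 * PI * (t - a)).
Proof.
  intros -> ->. unfold dot_e.
  replace (2 * PI * (t - a)) with (2 * PI * t - 2 * PI * a) by ring.
  rewrite cos_minus. ring.
Qed.

Section AlongDiameter.

Variables p q c a : R.
Hypothesis HP : in_D (p, q).
Hypothesis Hc : 0 <= c.
Hypothesis Hp : p = c * cos (2 * PI * a).
Hypothesis Hq : q = c * sin (2 * PI * a).

Lemma psi_deriv_le_before (s t : R) :
  a - / 2 <= s -> s <= t -> t <= a -> psi_deriv p q s <= psi_deriv p q t.
Proof.
  intros Hs Hst Ht. pose proof PI_RGT_0.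
  apply psi_deriv_le; [exact HP |]. rewrite !(dot_e_polar c a p q _ Hp Hq).
  apply Rmult_le_compat_l; [exact Hc |].
  rewrite <- (cos_neg (2 * PI * (s - a))), <- (cos_neg (2 * PI * (t - a))).
  apply cos_decr_1; nra.
Qed.

Lemma psi_deriv_le_after (s t : R) :
  a <= s -> s <= t -> t <= a + / 2 -> psi_deriv p q t <= psi_deriv p q s.
Proof.
  intros Hs Hst Ht. pose proof PI_RGT_0.
  apply psi_deriv_le; [exact HP |]. rewrite !(dot_e_polar c a p q _ Hp Hq).
  apply Rmult_le_compat_l; [exact Hc |].
  apply cos_decr_1; nra.
Qed.

End AlongDiameter.

Lemma collinear_O_unit (p q x y : R) :
  on_S1 (x, y) -> collinear O (p, q) (x, y) ->
  p = (p * x + q * y) * x /\ q = (p * x + q * y) * y.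
Proof.
  unfold on_S1, collinear, O; cbn [fst snd]. intros Hu Hcol.
  split.
  - transitivity (p * (x ^ 2 + y ^ 2) - y * ((p - 0) * (y - 0) - (q - 0) * (x - 0)));
      [rewrite Hu, Hcol | ]; ring.
  - transitivity (q * (x ^ 2 + y ^ 2) + x * ((p - 0) * (y - 0) - (q - 0) * (x - 0)));
      [rewrite Hu, Hcol | ]; ring.
Qed.

Lemma collinear_O_opposite (p q x1 y1 x2 y2 : R) :
  (p, q) <> O -> on_S1 (x1, y1) -> on_S1 (x2, y2) ->
  collinear O (p, q) (x1, y1) -> collinear O (p, q) (x2, y2) -> (x1, y1) <> (x2, y2) ->
  exists c, p = c * x1 /\ q = c * y1 /\ x2 = - x1 /\ y2 = - y1.
Proof.
  intros HPO Hu1 Hu2 Hc1 Hc2 Hne.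
  destruct (collinear_O_unit p q x1 y1 Hu1 Hc1) as [Hp Hq].
  set (c := p * x1 + q * y1) in *.
  assert (Hc : c <> 0) by (intro Z; apply HPO; rewrite Hp, Hq, Z; unfold O; f_equal; ring).
  assert (Hc21 : collinear O (x2, y2) (x1, y1)).
  { unfold collinear, O in *; cbn [fst snd] in *.
    apply (Rmult_eq_reg_l c); [| exact Hc]. rewrite Hp, Hq in Hc2. lra. }
  destruct (collinear_O_unit x2 y2 x1 y1 Hu1 Hc21) as [Hx2 Hy2].
  set (d := x2 * x1 + y2 * y1) in *.
  assert (Hd1 : d <> 1) by (intro E; apply Hne; rewrite Hx2, Hy2, E; f_equal; ring).
  assert (Hd : d = -1).
  { unfold on_S1 in *; cbn [fst snd] in *. rewrite Hx2, Hy2 in Hu2.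
    assert (Hdd : (d - 1) * (d + 1) = 0) by nra.
    destruct (Rmult_integral _ _ Hdd); [exfalso; apply Hd1 | ]; lra. }
  rewrite Hd in Hx2, Hy2. exists c. repeat split; lra.
Qed.

Lemma closer_endpoint_pos (p q c x y : R) :
  on_S1 (x, y) -> p = c * x -> q = c * y ->
  edist (x, y) (p, q) < edist (- x, - y) (p, q) -> 0 < c.
Proof.
  unfold on_S1, edist; cbn [fst snd]. intros Hu -> -> Hlt.
  apply sqrt_lt_0_alt in Hlt. nra.
Qed.

Lemma half_turn (a b : R) :
  fst (e a) + fst (e b) = 0 -> snd (e a) + snd (e b) = 0 -> a < b -> b <= a + 1 ->
  b = a + / 2.
Proof.
  unfold e; cbn [fst snd]. intros Hc Hs Hab Hba. pose proof PI_RGT_0.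
  assert (Hd : cos (2 * PI * (b - a)) = -1).
  { replace (2 * PI * (b - a)) with (2 * PI * b - 2 * PI * a) by ring.
    rewrite cos_minus. replace (cos (2 * PI * a)) with (- cos (2 * PI * b)) by lra.
    replace (sin (2 * PI * a)) with (- sin (2 * PI * b)) by lra.
    pose proof (cos_sin_sq (2 * PI * b)). lra. }
  destruct (Rtotal_order (2 * PI * (b - a)) PI) as [Hlt | [Heq | Hgt]].
  - pose proof (cos_decreasing_1 (2 * PI * (b - a)) PI
                  ltac:(nra) ltac:(lra) ltac:(lra) ltac:(lra) Hlt).
    rewrite cos_PI in *. lra.
  - apply (Rmult_eq_reg_l (2 * PI)); [| lra]. lra.
  - pose proof (cos_increasing_1 PI (2 * PI * (b - a))
                  ltac:(lra) ltac:(lra) ltac:(lra) ltac:(nra) Hgt).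
    rewrite cos_PI in *. lra.
Qed.

Theorem lemma2p3 (P u1 u2 : pt) (g : R -> R) :
  in_D P -> P <> O ->
  on_S1 u1 -> on_S1 u2 -> collinear O P u1 -> collinear O P u2 -> u1 <> u2 ->
  edist u1 P < edist u2 P ->
  (* g is the lift of psi_P, normalized by g(0) in [0,1) *)
  (forall t, continuous g t) -> 0 <= g 0 -> g 0 < 1 ->
  (forall t, is_psi P (e t) (e (g t))) ->
  (forall t, ex_derive g t) /\
  (* increasing on arc[u2,u1): lifted as [a2, a1) with a2 < a1 -> a1 <= a2 + 1 *)
  (forall a1 a2, e a1 = u1 -> e a2 = u2 -> a2 < a1 -> a1 <= a2 + 1 ->
     forall s t, a2 <= s -> s <= t -> t < a1 -> Rabs (Derive g s) <= Rabs (Derive g t)) /\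
  (* decreasing on arc[u1,u2): lifted as [b1, b2) with b1 < b2 -> b2 <= b1 + 1 *)
  (forall b1 b2, e b1 = u1 -> e b2 = u2 -> b1 < b2 -> b2 <= b1 + 1 ->
     forall s t, b1 <= s -> s <= t -> t < b2 -> Rabs (Derive g t) <= Rabs (Derive g s)).
Proof.
  intros HP HPO Hu1 Hu2 Hc1 Hc2 Hne Hdist Hcont _ _ Hpsi.
  destruct P as [p q], u1 as [x1 y1], u2 as [x2 y2].
  assert (Hder : forall t, is_derive g t (psi_deriv p q t))
    by (intro t; apply is_derive_psi_lift; auto).
  assert (Habs : forall t, Rabs (Derive g t) = psi_deriv p q t).
  { intro t. rewrite (is_derive_unique _ _ _ (Hder t)).
    apply Rabs_pos_eq, Rlt_le, psi_deriv_pos, HP. }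
  destruct (collinear_O_opposite p q x1 y1 x2 y2 HPO Hu1 Hu2 Hc1 Hc2 Hne)
    as [c [Hp [Hq [-> ->]]]].
  pose proof (closer_endpoint_pos _ _ _ _ _ Hu1 Hp Hq Hdist) as Hc.
  split; [intro t; eexists; apply Hder |]. split.
  - intros a1 a2 E1 E2 H21 H12 s t Hs Hst Ht. rewrite !Habs.
    assert (Ha : a1 = a2 + / 2) by (apply half_turn; rewrite ?E1, ?E2; cbn [fst snd]; lra).
    injection E1 as Hx1 Hy1. rewrite <- Hx1 in Hp. rewrite <- Hy1 in Hq.
    apply (psi_deriv_le_before p q c a1 HP (Rlt_le _ _ Hc) Hp Hq); lra.
  - intros b1 b2 E1 E2 H12 H21 s t Hs Hst Ht. rewrite !Habs.
    assert (Hb : b2 = b1 + / 2) by (apply half_turn; rewrite ?E1, ?E2; cbn [fst snd]; lra).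
    injection E1 as Hx1 Hy1. rewrite <- Hx1 in Hp. rewrite <- Hy1 in Hq.
    apply (psi_deriv_le_after p q c b1 HP (Rlt_le _ _ Hc) Hp Hq); lra.
Qed.
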